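(* In the setting of the context, let $(S,E,I,R)$ be the functions defined there and set $\hat S(u)=S(\varphi(u))$, $\hat E(u)=E(\varphi(u))$, $\hat I(u)=I(\varphi(u))$, $\hat R(u)=R(\varphi(u))$ for $u\in(u_\infty,u_0]$. Then for $u\in(u_\infty,u_0)$ \[ \frac{d\hat S}{du}=\frac{\hat S(u)}{u},\quad \frac{d\hat E}{du}-\frac{\delta}{u\psi(u)}\hat E(u)=-\frac{\hat S(u)}{u},\quad \frac{d\hat I}{du}-\frac{\gamma}{\beta}\frac1u=-\frac{\delta}{u\psi(u)}\hat E(u),\quad \frac{d\hat R}{du}=-\frac{\gamma}{\beta}\frac1u, \] and $\hat S(u_0)=\tilde S$, $\hat E(u_0)=\tilde E$, $\hat I(u_0)=\tilde I$, $\hat R(u_0)=\tilde R$.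
   Context: Let $\beta,\gamma,\delta>0$ be constants and $\tilde S,\tilde E,\tilde I,\tilde R$ real numbers with $N:=\tilde S+\tilde E+\tilde I+\tilde R>0$. Standing assumptions: (A1) $\tilde I>0$; (A2) $\tilde E>(\gamma/\delta)\tilde I$; (A3) $\tilde S>\delta\tilde E/(\beta\tilde I)$; (A4) $\tilde R\ge 0$ and $N>\tilde S e^{(\beta/\gamma)\tilde R}+\tilde R$. Let $\alpha$ be the unique solution in $(\tilde R,N)$ of $x=N-\tilde S e^{(\beta/\gamma)\tilde R}e^{-(\beta/\gamma)x}$, and assume (A5) $\tilde S<(\gamma/\beta)e^{(\beta/\gamma)(\alpha-\tilde R)}$. Put $u_0:=e^{-(\beta/\gamma)\tilde R}$, $u_\infty:=e^{-(\beta/\gamma)\alpha}$. Let $\psi$ be the unique function, continuous and positive on $(u_\infty,u_0]$ and $C^1$ on $(u_\infty,u_0)$, satisfying $\psi'(u)\psi(u)-\frac{\gamma+\delta}{u}\psi(u)=-\delta\,\frac{\beta N-\beta\tilde S e^{(\beta/\gamma)\tilde R}u+\gamma\log u}{u}$ on $(u_\infty,u_0)$ and $\psi(u_0)=\beta\tilde I$. Let $\varphi(u):=\int_u^{u_0}\frac{d\xi}{\xi\psi(\xi)}$; $\varphi$ is a strictly decreasing continuous bijection from $(u_\infty,u_0]$ onto $[0,\infty)$, $C^1$ on $(u_\infty,u_0)$, with inverse $\varphi^{-1}:[0,\infty)\to(u_\infty,u_0]$. For $t\ge 0$ define $S(t)=\tilde S e^{(\beta/\gamma)\tilde R}\varphi^{-1}(t)$,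 $E(t)=\tilde E e^{-\delta t}+\tilde S e^{(\beta/\gamma)\tilde R}e^{-\delta t}\int_{\varphi^{-1}(t)}^{u_0}e^{\delta\varphi(v)}dv$, $I(t)=N-\tilde S e^{(\beta/\gamma)\tilde R}\varphi^{-1}(t)+\frac{\gamma}{\beta}\log\varphi^{-1}(t)-E(t)$, $R(t)=-\frac{\gamma}{\beta}\log\varphi^{-1}(t)$; this $(S,E,I,R)$ solves $S'=-\beta SI$, $E'=\beta SI-\delta E$, $I'=\delta E-\gamma I$, $R'=\gamma I$ ($t>0$) with $(S,E,I,R)(0)=(\tilde S,\tilde E,\tilde I,\tilde R)$. *)

From Stdlib Require Import Reals Lra ClassicalEpsilon.
From Coquelicot Require Import Coquelicot.
Open Scope R_scope.

Definition Ntot (St Et It Rt : R) : R := St + Et + It + Rt.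

Definition phi (psi : R -> R) (u0 u : R) : R :=
  RInt (fun xi => / (xi * psi xi)) u u0.

(* phi^{-1}(t): the (a) point u in (u_inf, u0] with phi(u) = t, chosen
   by Hilbert's epsilon (unique since phi is strictly decreasing). *)
Definition phiinv (psi : R -> R) (uinf u0 t : R) : R :=
  epsilon (inhabits 0) (fun u => uinf < u <= u0 /\ phi psi u0 u = t).


Definition Sfun (beta gamma delta St Et It Rt uinf u0 : R) (psi : R -> R) (t : R) : R :=
  St * exp (beta / gamma * Rt) * phiinv psi uinf u0 t.

Definition Efun (beta gamma delta St Et It Rt uinf u0 : R) (psi : R -> R) (t : R) : R :=
  Et * exp (- delta * t)
  + St * exp (beta / gamma * Rt) * exp (- delta * t)
    * RInt (fun v => exp (delta * phi psi u0 v)) (phiinv psi uinf u0 t) u0.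

Definition Ifun (beta gamma delta St Et It Rt uinf u0 : R) (psi : R -> R) (t : R) : R :=
  Ntot St Et It Rt - St * exp (beta / gamma * Rt) * phiinv psi uinf u0 t
  + gamma / beta * ln (phiinv psi uinf u0 t) - Efun beta gamma delta St Et It Rt uinf u0 psi t.

Definition Rfun (beta gamma delta St Et It Rt uinf u0 : R) (psi : R -> R) (t : R) : R :=
  - (gamma / beta) * ln (phiinv psi uinf u0 t).

(* Write K := S~ e^((beta/gamma) R~).  Since its integrand 1/(xi psi(xi)) is
   positive, phi is strictly decreasing on (u_inf, u0], so phi^{-1}(phi(u)) = u
   there.  Hence S^, I^ and R^ are explicit functions of u, and
   E^(u) = e^(-delta phi(u)) (E~ + K int_u^u0 e^(delta phi)).  The four equations
   follow by differentiating, using phi'(u) = -1/(u psi(u)) (fundamental theorem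
   of calculus).  Only the continuity and positivity of psi on (u_inf, u0] are
   used: the ODE for psi and (A1)-(A5) serve to make such a psi exist. *)

From Stdlib Require Import Reals Lra ClassicalEpsilon.
From Coquelicot Require Import Coquelicot.
Open Scope R_scope.

Lemma ball_Rmin_l (b x y eps : R) :
  ball x eps y -> ball (Rmin x b) eps (Rmin y b).
Proof.
  unfold ball; simpl; unfold AbsRing_ball, abs, minus, plus, opp; simpl.
  unfold Rmin; do 2 destruct Rle_dec; unfold Rabs; repeat destruct Rcase_abs; lra.
Qed.

Lemma continuous_Rmin_l (b x : R) : continuous (fun y => Rmin y b) x.
Proof. intros P [eps HP]; exists eps; intros y Hy; apply HP, ball_Rmin_l, Hy. Qed.

Lemma locally_gt (a x : R) : a < x -> locally x (fun y => a < y).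
Proof. intros Hx; exact (locally_open _ _ (open_gt a) (fun _ H => H) x Hx). Qed.

Lemma locally_in_interval (a b x : R) :
  a < x < b -> locally x (fun y => a < y < b).
Proof.
  intros Hx; exact (locally_open _ _ (open_and _ _ (open_gt a) (open_lt b))
                      (fun _ H => H) x Hx).
Qed.

Lemma filterlim_Rmin_within (a b x : R) : a < b -> a < x ->
  filterlim (fun y => Rmin y b) (locally x)
    (within (fun y => a < y <= b) (locally (Rmin x b))).
Proof.
  intros Hab Hx P [eps HP]; unfold filtermap.
  apply (filter_imp (fun y => a < y /\ ball x eps y)).
  - intros y [Hy Hball]; apply HP; [exact (ball_Rmin_l b _ _ _ Hball)|].
    split; [now apply Rmin_glb_lt | apply Rmin_r].
  - exact (filter_and _ _ (locally_gt a x Hx) (locally_ball x eps)).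
Qed.

Lemma continuous_comp_Rmin_within (f : R -> R) (a b x : R) :
  a < b -> a < x ->
  (forall z, a < z <= b ->
     filterlim f (within (fun y => a < y <= b) (locally z)) (locally (f z))) ->
  continuous (fun y => f (Rmin y b)) x.
Proof.
  intros Hab Hx Hf.
  apply (filterlim_comp _ _ _ _ f _ _ _ (filterlim_Rmin_within a b x Hab Hx)).
  apply Hf; split; [now apply Rmin_glb_lt | apply Rmin_r].
Qed.

Section IntegralsOnHalfLine.

Variables (f : R -> R) (a : R).
Hypothesis f_cont : forall x, a < x -> continuous f x.

Lemma ex_RInt_half_line (x y : R) : a < x -> a < y -> ex_RInt f x y.
Proof.
  intros Hx Hy; apply (ex_RInt_continuous (V := R_CompleteNormedModule)).
  intros z [Hz _]; apply f_cont.
  apply Rlt_le_trans with (2 := Hz); now apply Rmin_glb_lt.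
Qed.

Lemma is_derive_RInt_lower (c v : R) :
  a < c -> a < v -> is_derive (fun w => RInt f w c) v (- f v).
Proof.
  intros Hc Hv; apply (is_derive_RInt' f _ v c).
  - apply (filter_imp (fun w => a < w)); [|exact (locally_gt a v Hv)].
    intros w Hw; apply (RInt_correct (V := R_CompleteNormedModule)).
    now apply ex_RInt_half_line.
  - now apply f_cont.
Qed.

Lemma RInt_lower_lt (c x y : R) :
  (forall z, a < z -> 0 < f z) -> a < c -> a < x < y ->
  RInt f y c < RInt f x c.
Proof.
  intros f_pos Hc Hxy.
  rewrite <- (RInt_Chasles f x y c) by (apply ex_RInt_half_line; lra).
  assert (0 < RInt f x y).
  { apply RInt_gt_0; [lra| |]; intros z Hz; [apply f_pos | apply f_cont]; lra. }
  simpl; unfold plus; simpl; lra.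
Qed.

End IntegralsOnHalfLine.

Lemma is_derive_ext_on_interval (f g : R -> R) (a b u l : R) :
  (forall t, a < t <= b -> g t = f t) -> a < u < b ->
  is_derive f u l -> is_derive g u l.
Proof.
  intros Hfg Hu; apply is_derive_ext_loc.
  apply (filter_imp (fun t => a < t < b)); [|exact (locally_in_interval a b u Hu)].
  intros t Ht; symmetry; apply Hfg; lra.
Qed.

Lemma is_derive_Derive (f : R -> R) (x l : R) :
  is_derive f x l -> ex_derive f x /\ Derive f x = l.
Proof. intros Hf; split; [now exists l | exact (is_derive_unique f x l Hf)]. Qed.

Section PhiReparametrization.

Variables (psi : R -> R) (uinf u0 : R).
Hypothesis uinf_ge0 : 0 <= uinf.
Hypothesis uinf_lt_u0 : uinf < u0.
Hypothesis psi_cont : forall u, uinf < u <= u0 ->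
  filterlim psi (within (fun x => uinf < x <= u0) (locally u)) (locally (psi u)).
Hypothesis psi_pos : forall u, uinf < u <= u0 -> 0 < psi u.

(* psi is only controlled on (uinf, u0]; clamping the argument at u0 makes the
   integrand continuous on a whole neighbourhood of u0, as the fundamental theorem
   of calculus requires there. *)
Definition phi_integrand (x : R) : R := / (Rmin x u0 * psi (Rmin x u0)).

Definition phi_ext (u : R) : R := RInt phi_integrand u u0.

Lemma Rmin_u0_in_domain (x : R) : uinf < x -> uinf < Rmin x u0 <= u0.
Proof. intros Hx; split; [now apply Rmin_glb_lt | apply Rmin_r]. Qed.

Lemma phi_integrand_denominator_pos (x : R) :
  uinf < x -> 0 < Rmin x u0 * psi (Rmin x u0).
Proof.
  intros Hx; pose proof (Rmin_u0_in_domain x Hx).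
  apply Rmult_lt_0_compat; [lra | now apply psi_pos].
Qed.

Lemma phi_integrand_pos (x : R) : uinf < x -> 0 < phi_integrand x.
Proof. intros Hx; apply Rinv_0_lt_compat, phi_integrand_denominator_pos, Hx. Qed.

Lemma phi_integrand_continuous (x : R) : uinf < x -> continuous phi_integrand x.
Proof.
  intros Hx; apply continuous_Rinv_comp.
  - apply (continuous_mult (fun y => Rmin y u0) (fun y => psi (Rmin y u0))).
    + apply continuous_Rmin_l.
    + exact (continuous_comp_Rmin_within psi uinf u0 x uinf_lt_u0 Hx psi_cont).
  - apply Rgt_not_eq, phi_integrand_denominator_pos, Hx.
Qed.

Lemma phi_integrand_in_domain (x : R) :
  x <= u0 -> phi_integrand x = / (x * psi x).
Proof. intros Hx; unfold phi_integrand; now rewrite Rmin_left. Qed.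

Lemma phi_eq_phi_ext (u : R) : u <= u0 -> phi psi u0 u = phi_ext u.
Proof.
  intros Hu; apply RInt_ext; intros x.
  rewrite Rmin_left, Rmax_right by lra; intros Hx.
  symmetry; apply phi_integrand_in_domain; lra.
Qed.

Lemma phi_ext_u0 : phi_ext u0 = 0.
Proof. apply (RInt_point (V := R_CompleteNormedModule)). Qed.

Lemma is_derive_phi_ext (u : R) :
  uinf < u -> is_derive phi_ext u (- phi_integrand u).
Proof.
  apply is_derive_RInt_lower; [exact phi_integrand_continuous | lra].
Qed.

Lemma phi_ext_decreasing (x y : R) : uinf < x < y -> phi_ext y < phi_ext x.
Proof.
  apply RInt_lower_lt; [exact phi_integrand_continuous | exact phi_integrand_pos | lra].
Qed.

Lemma phiinv_phi (u : R) : uinf < u <= u0 -> phiinv psi uinf u0 (phi psi u0 u) = u.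
Proof.
  intros Hu; unfold phiinv.
  destruct (epsilon_spec (inhabits 0)
              (fun v => uinf < v <= u0 /\ phi psi u0 v = phi psi u0 u))
    as [Hv Hphi]; [now exists u|].
  set (v := epsilon _ _) in *.
  rewrite !phi_eq_phi_ext in Hphi by lra.
  destruct (Rtotal_order u v) as [Huv | [Huv | Huv]]; [| easy |].
  - pose proof (phi_ext_decreasing u v (conj (proj1 Hu) Huv)); lra.
  - pose proof (phi_ext_decreasing v u (conj (proj1 Hv) Huv)); lra.
Qed.

Variable delta : R.

Definition RInt_exp_phi (u : R) : R := RInt (fun v => exp (delta * phi_ext v)) u u0.

Lemma continuous_exp_phi_ext (x : R) :
  uinf < x -> continuous (fun v => exp (delta * phi_ext v)) x.
Proof.
  intros Hx; apply (ex_derive_continuous (K := R_AbsRing) (V := R_NormedModule)).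
  auto_derive; now exists (- phi_integrand x); apply is_derive_phi_ext.
Qed.

Lemma is_derive_RInt_exp_phi (u : R) :
  uinf < u -> is_derive RInt_exp_phi u (- exp (delta * phi_ext u)).
Proof.
  apply (is_derive_RInt_lower (fun v => exp (delta * phi_ext v)) uinf);
    [exact continuous_exp_phi_ext | lra].
Qed.

Lemma RInt_exp_phi_u0 : RInt_exp_phi u0 = 0.
Proof. apply (RInt_point (V := R_CompleteNormedModule)). Qed.

Variables (beta gamma St Et It Rt : R).

Local Notation K := (St * exp (beta / gamma * Rt)).

Definition E_closed (u : R) : R := exp (- delta * phi_ext u) * (Et + K * RInt_exp_phi u).

Lemma is_derive_E_closed (u : R) :
  uinf < u -> is_derive E_closed u (delta * phi_integrand u * E_closed u - K).
Proof.
  intros Hu; unfold E_closed.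
  pose proof (is_derive_phi_ext u Hu) as dphi.
  pose proof (is_derive_RInt_exp_phi u Hu) as dQ.
  auto_derive.
  - split; [now exists (- phi_integrand u) | split; [eexists; exact dQ | easy]].
  - replace (Derive (fun x => phi_ext x) u) with (- phi_integrand u)
      by (symmetry; now apply is_derive_unique).
    replace (Derive (fun x => RInt_exp_phi x) u) with (- exp (delta * phi_ext u))
      by (symmetry; now apply is_derive_unique).
    replace (exp (- delta * phi_ext u)) with (/ exp (delta * phi_ext u))
      by (rewrite <- exp_Ropp; f_equal; ring).
    field; apply Rgt_not_eq, exp_pos.
Qed.

Local Notation Shat u := (Sfun beta gamma delta St Et It Rt uinf u0 psi (phi psi u0 u)).
Local Notation Ehat u := (Efun beta gamma delta St Et It Rt uinf u0 psi (phi psi u0 u)).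
Local Notation Ihat u := (Ifun beta gamma delta St Et It Rt uinf u0 psi (phi psi u0 u)).
Local Notation Rhat u := (Rfun beta gamma delta St Et It Rt uinf u0 psi (phi psi u0 u)).

Lemma Shat_eq (u : R) : uinf < u <= u0 -> Shat u = K * u.
Proof. intros Hu; unfold Sfun; now rewrite phiinv_phi. Qed.

Lemma Ehat_eq (u : R) : uinf < u <= u0 -> Ehat u = E_closed u.
Proof.
  intros Hu; unfold Efun, E_closed, RInt_exp_phi.
  rewrite phiinv_phi, phi_eq_phi_ext by lra.
  rewrite (RInt_ext _ (fun v => exp (delta * phi_ext v))); [ring|].
  intros v; rewrite Rmin_left, Rmax_right by lra; intros Hv.
  now rewrite phi_eq_phi_ext by lra.
Qed.

Lemma Ihat_eq (u : R) : uinf < u <= u0 ->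
  Ihat u = Ntot St Et It Rt - K * u + gamma / beta * ln u - Ehat u.
Proof. intros Hu; unfold Ifun; now rewrite phiinv_phi. Qed.

Lemma Rhat_eq (u : R) : uinf < u <= u0 -> Rhat u = - (gamma / beta) * ln u.
Proof. intros Hu; unfold Rfun; now rewrite phiinv_phi. Qed.

Lemma is_derive_Shat (u : R) : uinf < u < u0 ->
  is_derive (fun v => Shat v) u (Shat u / u).
Proof.
  intros Hu; apply (is_derive_ext_on_interval (fun v => K * v) _ uinf u0);
    [exact Shat_eq | exact Hu |].
  rewrite Shat_eq by lra.
  auto_derive; [easy | field; lra].
Qed.

Lemma is_derive_Ehat (u : R) : uinf < u < u0 ->
  is_derive (fun v => Ehat v) u (delta / (u * psi u) * Ehat u - Shat u / u).
Proof.
  intros Hu; apply (is_derive_ext_on_interval E_closed _ uinf u0);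
    [exact Ehat_eq | exact Hu |].
  rewrite Ehat_eq, Shat_eq by lra.
  replace (delta / (u * psi u)) with (delta * phi_integrand u)
    by (rewrite phi_integrand_in_domain by lra; reflexivity).
  replace (K * u / u) with K by (field; lra).
  apply is_derive_E_closed; lra.
Qed.

Lemma is_derive_Ihat (u : R) : uinf < u < u0 ->
  is_derive (fun v => Ihat v) u (gamma / beta * (1 / u) - delta / (u * psi u) * Ehat u).
Proof.
  intros Hu.
  apply (is_derive_ext_on_interval
           (fun v => Ntot St Et It Rt - K * v + gamma / beta * ln v - Ehat v) _ uinf u0);
    [exact Ihat_eq | exact Hu |].
  assert (dL : is_derive (fun v => Ntot St Et It Rt - K * v + gamma / beta * ln v) u
                 (- K + gamma / beta * (1 / u)))
    by (auto_derive; [lra | unfold Rdiv; ring]).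
  pose proof (is_derive_minus _ _ _ _ _ dL (is_derive_Ehat u Hu)) as dI.
  rewrite Shat_eq in dI by lra.
  replace (K * u / u) with K in dI by (field; lra).
  replace (gamma / beta * (1 / u) - delta / (u * psi u) * Ehat u)
    with (minus (- K + gamma / beta * (1 / u)) (delta / (u * psi u) * Ehat u - K))
    by (unfold minus, plus, opp; simpl; ring).
  exact dI.
Qed.

Lemma is_derive_Rhat (u : R) : uinf < u < u0 ->
  is_derive (fun v => Rhat v) u (- (gamma / beta) * (1 / u)).
Proof.
  intros Hu; apply (is_derive_ext_on_interval (fun v => - (gamma / beta) * ln v) _ uinf u0);
    [exact Rhat_eq | exact Hu |].
  auto_derive; [lra | unfold Rdiv; ring].
Qed.

Lemma Ehat_u0 : Ehat u0 = Et.
Proof.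
  rewrite Ehat_eq by lra; unfold E_closed.
  rewrite phi_ext_u0, RInt_exp_phi_u0, Rmult_0_r, exp_0; ring.
Qed.

End PhiReparametrization.

Theorem theorem5
  (beta gamma delta St Et It Rt alpha : R) (psi : R -> R)
  (Hbeta : 0 < beta) (Hgamma : 0 < gamma) (Hdelta : 0 < delta)
  (HN : 0 < Ntot St Et It Rt)
  (A1 : 0 < It)
  (A2 : Et > gamma / delta * It)
  (A3 : St > delta * Et / (beta * It))
  (A4a : 0 <= Rt)
  (A4b : Ntot St Et It Rt > St * exp (beta / gamma * Rt) + Rt)
  (Halpha_int : Rt < alpha < Ntot St Et It Rt)
  (Halpha_eq : alpha = Ntot St Et It Rt
                 - St * exp (beta / gamma * Rt) * exp (- (beta / gamma) * alpha))
  (A5 : St < gamma / beta * exp (beta / gamma * (alpha - Rt)))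
  (* psi: continuous and positive on (u_inf, u0], C^1 on (u_inf, u0),
     solving the ODE there, with psi(u0) = beta * I~ *)
  (Hpsi_cont : forall u,
      exp (- (beta / gamma) * alpha) < u <= exp (- (beta / gamma) * Rt) ->
      filterlim psi
        (within (fun x => exp (- (beta / gamma) * alpha) < x
                          <= exp (- (beta / gamma) * Rt)) (locally u))
        (locally (psi u)))
  (Hpsi_pos : forall u,
      exp (- (beta / gamma) * alpha) < u <= exp (- (beta / gamma) * Rt) ->
      0 < psi u)
  (Hpsi_C1 : forall u,
      exp (- (beta / gamma) * alpha) < u < exp (- (beta / gamma) * Rt) ->
      ex_derive psi u /\ continuous (Derive psi) u)
  (Hpsi_ode : forall u,
      exp (- (beta / gamma) * alpha) < u < exp (- (beta / gamma) * Rt) ->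
      Derive psi u * psi u - (gamma + delta) / u * psi u
      = - delta * (beta * Ntot St Et It Rt
                   - beta * St * exp (beta / gamma * Rt) * u
                   + gamma * ln u) / u)
  (Hpsi_u0 : psi (exp (- (beta / gamma) * Rt)) = beta * It) :
  let u0 := exp (- (beta / gamma) * Rt) in
  let uinf := exp (- (beta / gamma) * alpha) in
  let Shat := fun u => Sfun beta gamma delta St Et It Rt uinf u0 psi (phi psi u0 u) in
  let Ehat := fun u => Efun beta gamma delta St Et It Rt uinf u0 psi (phi psi u0 u) in
  let Ihat := fun u => Ifun beta gamma delta St Et It Rt uinf u0 psi (phi psi u0 u) in
  let Rhat := fun u => Rfun beta gamma delta St Et It Rt uinf u0 psi (phi psi u0 u) in
  (forall u, uinf < u < u0 ->
     (ex_derive Shat u /\ Derive Shat u = Shat u / u)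
     /\ (ex_derive Ehat u /\
         Derive Ehat u - delta / (u * psi u) * Ehat u = - (Shat u / u))
     /\ (ex_derive Ihat u /\
         Derive Ihat u - gamma / beta * (1 / u) = - (delta / (u * psi u) * Ehat u))
     /\ (ex_derive Rhat u /\ Derive Rhat u = - (gamma / beta) * (1 / u)))
  /\ Shat u0 = St /\ Ehat u0 = Et /\ Ihat u0 = It /\ Rhat u0 = Rt.
Proof.
  intros u0 uinf Shat Ehat Ihat Rhat.
  assert (beta_gamma_pos : 0 < beta / gamma) by (apply Rdiv_lt_0_compat; lra).
  assert (uinf_ge0 : 0 <= uinf) by (apply Rlt_le, exp_pos).
  assert (uinf_lt_u0 : uinf < u0) by (apply exp_increasing; nra).
  assert (ln_u0 : ln u0 = - (beta / gamma) * Rt) by apply ln_exp.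
  assert (K_u0 : St * exp (beta / gamma * Rt) * u0 = St).
  { unfold u0; rewrite Rmult_assoc, <- exp_plus, <- Ropp_mult_distr_l, Rplus_opp_r, exp_0.
    ring. }
  assert (u0_in : uinf < u0 <= u0) by lra.
  split.
  - intros u Hu.
    destruct (is_derive_Derive Ehat u (delta / (u * psi u) * Ehat u - Shat u / u))
      as [exE dE]; [eapply is_derive_Ehat; eauto|].
    destruct (is_derive_Derive Ihat u (gamma / beta * (1 / u) - delta / (u * psi u) * Ehat u))
      as [exI dI]; [eapply is_derive_Ihat; eauto|].
    split; [|split; [|split]].
    + apply is_derive_Derive; eapply is_derive_Shat; eauto.
    + split; [exact exE | rewrite dE; ring].
    + split; [exact exI | rewrite dI; ring].
    + apply is_derive_Derive; eapply is_derive_Rhat; eauto.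
  - split; [|split; [|split]].
    + unfold Shat; rewrite Shat_eq; eauto.
    + eapply Ehat_u0; eauto.
    + unfold Ihat; rewrite Ihat_eq, (Ehat_u0 psi uinf u0), ln_u0, K_u0; eauto.
      unfold Ntot; field; lra.
    + unfold Rhat; rewrite Rhat_eq, ln_u0; eauto.
      field; lra.
Qed.
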